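(* Let $\mathcal{X}$ be a real Banach space and $g:[a,b]\to\mathcal{X}^*$. Assume that $g$ is Denjoy–Gel'fand integrable on $[a,t]$ for every $t\in[a,b)$ and that for each $y\in\mathcal{X}$ the limit $\lim_{t\to b^-}\mathcal{D}\int_a^t yg$ exists. Then $g$ is Denjoy–Gel'fand integrable on $[a,b]$ and $$\Big\langle y,\ \mathcal{DG}\int_a^b g\Big\rangle=\lim_{t\to b^-}\Big\langle y,\ \mathcal{DG}\int_a^t g\Big\rangle\quad\text{for each } y\in\mathcal{X}.$$
   Context: For $y\in\mathcal{X}$, $yg$ denotes the real function $t\mapsto g(t)(y)$. A function $F:[a,b]\to\mathbb{R}$ is AC on a set $E$ if for every $\epsilon>0$ there is $\eta>0$ such that for every finite family of nonoverlapping intervals $[c_i,d_i]$ with endpoints in $E$ and $\sum(d_i-c_i)<\eta$ one has $\sum|F(d_i)-F(c_i)|<\epsilon$; $F$ is ACG on $[a,b]$ if $F$ is continuous on $[a,b]$ and $[a,b]$ is a countable union of sets on each of which $F$ is AC. A function $h:[a,b]\to\mathbb{R}$ is Denjoy integrable on $[a,b]$ if there is an ACG function $F$ on $[a,b]$ whose approximate derivative equals $h$ a.e.; then $\mathcal{D}\int_a^b h=F(b)-F(a)$ (and similarly on subintervals). A function $g:[a,b]\to\mathcal{X}^*$ is Denjoy–Gel'fand integrable on $[a,b]$ if $yg$ is Denjoy integrable on $[a,b]$ for each $y\in\mathcal{X}$ and for every interval $I\subset[a,b]$ there is $y_I^*\in\mathcal{X}^*$ with $y_I^*(y)=\mathcal{D}\int_I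 yg$ for all $y\in\mathcal{X}$; one writes $\mathcal{DG}\int_I g=y_I^*$. *)

From Stdlib Require Import Reals.
Open Scope R_scope.

Record BanachSpace := {
  bs_car :> Type;
  bs_zero : bs_car;
  bs_add : bs_car -> bs_car -> bs_car;
  bs_opp : bs_car -> bs_car;
  bs_scal : R -> bs_car -> bs_car;
  bs_norm : bs_car -> R;
  bs_add_assoc : forall x y z, bs_add x (bs_add y z) = bs_add (bs_add x y) z;
  bs_add_comm : forall x y, bs_add x y = bs_add y x;
  bs_add_zero : forall x, bs_add x bs_zero = x;
  bs_add_opp : forall x, bs_add x (bs_opp x) = bs_zero;
  bs_scal_distr_l : forall r x y, bs_scal r (bs_add x y) = bs_add (bs_scal r x) (bs_scal r y);
  bs_scal_distr_r : forall r s x, bs_scal (r + s) x = bs_add (bs_scal r x) (bs_scal s x);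
  bs_scal_assoc : forall r s x, bs_scal r (bs_scal s x) = bs_scal (r * s) x;
  bs_scal_one : forall x, bs_scal 1 x = x;
  bs_norm_eq0 : forall x, bs_norm x = 0 -> x = bs_zero;
  bs_norm_triangle : forall x y, bs_norm (bs_add x y) <= bs_norm x + bs_norm y;
  bs_norm_scal : forall r x, bs_norm (bs_scal r x) = Rabs r * bs_norm x;
  bs_complete : forall u : nat -> bs_car,
    (forall eps, 0 < eps -> exists N, forall m n, (N <= m)%nat -> (N <= n)%nat ->
        bs_norm (bs_add (u m) (bs_opp (u n))) < eps) ->
    exists l, forall eps, 0 < eps -> exists N, forall n, (N <= n)%nat ->
        bs_norm (bs_add (u n) (bs_opp l)) < eps
}.

Definition is_dual (X : BanachSpace) (f : X -> R) : Prop :=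
  (forall x y, f (bs_add X x y) = f x + f y) /\
  (forall r x, f (bs_scal X r x) = r * f x) /\
  (exists M, forall x, Rabs (f x) <= M * bs_norm X x).

Definition dual (X : BanachSpace) := { f : X -> R | is_dual X f }.
Definition ev {X : BanachSpace} (f : dual X) (y : X) : R := proj1_sig f y.

Fixpoint fsum (f : nat -> R) (n : nat) : R :=
  match n with O => 0 | S k => fsum f k + f k end.

(* m^*(E) <= c  (Lebesgue outer measure via countable interval covers) *)
Definition outer_le (E : R -> Prop) (c : R) : Prop :=
  forall eps, 0 < eps -> exists an bn : nat -> R,
    (forall x, E x -> exists n, an n < x < bn n) /\
    (forall n, an n <= bn n) /\
    (forall N, fsum (fun n => bn n - an n) N <= c + eps).

Definition null (E : R -> Prop) : Prop := outer_le E 0.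

Definition density_zero (E : R -> Prop) (x : R) : Prop :=
  forall eta, 0 < eta -> exists delta, 0 < delta /\
    forall r, 0 < r < delta -> outer_le (fun t => E t /\ x - r <= t <= x + r) (eta * (2 * r)).

Definition ap_deriv (F : R -> R) (a b x l : R) : Prop :=
  forall eps, 0 < eps ->
    density_zero (fun t => a <= t <= b /\ t <> x /\
                          eps <= Rabs ((F t - F x) / (t - x) - l)) x.

Definition AC_on (F : R -> R) (E : R -> Prop) : Prop :=
  forall eps, 0 < eps -> exists eta, 0 < eta /\
    forall (n : nat) (c d : nat -> R),
      (forall i, (i < n)%nat -> E (c i) /\ E (d i) /\ c i <= d i) ->
      (forall i j, (i < n)%nat -> (j < n)%nat -> i <> j -> d i <= c j \/ d j <= c i) ->
      fsum (fun i => d i - c i) n < eta ->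
      fsum (fun i => Rabs (F (d i) - F (c i))) n < eps.

Definition cont_on (F : R -> R) (a b : R) : Prop :=
  forall x, a <= x <= b -> forall eps, 0 < eps -> exists delta, 0 < delta /\
    forall t, a <= t <= b -> Rabs (t - x) < delta -> Rabs (F t - F x) < eps.

Definition ACG (F : R -> R) (a b : R) : Prop :=
  cont_on F a b /\
  exists En : nat -> R -> Prop,
    (forall x, a <= x <= b -> exists n, En n x) /\
    (forall n x, En n x -> a <= x <= b) /\
    (forall n, AC_on F (En n)).

Definition D_int (h : R -> R) (c d v : R) : Prop :=
  c <= d /\
  exists F, ACG F c d /\
    null (fun x => c <= x <= d /\ ~ ap_deriv F c d x (h x)) /\
    v = F d - F c.

Definition D_integrable (h : R -> R) (c d : R) : Prop := exists v, D_int h c d v.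

Definition yg {X : BanachSpace} (g : R -> dual X) (y : X) : R -> R :=
  fun t => ev (g t) y.

Definition DG_int {X : BanachSpace} (g : R -> dual X) (c d : R) (ys : dual X) : Prop :=
  forall y, D_int (yg g y) c d (ev ys y).

Definition DG_integrable {X : BanachSpace} (g : R -> dual X) (a b : R) : Prop :=
  (forall y, D_integrable (yg g y) a b) /\
  (forall c d, a <= c -> c <= d -> d <= b -> exists ys, DG_int g c d ys).

From Stdlib Require Import Reals Lra Lia Cantor ClassicalEpsilon FunctionalExtensionality.
Open Scope R_scope.

(* For each y, the function yg is Denjoy integrable on [a, b] by Hake's theorem: primitives
   on an increasing sequence of intervals exhausting [a, b) are shifted by constants and
   glued into one function, which becomes a primitive on [a, b] once it is extended to b by
   the limit, because being ACG and having the right approximate derivative outside a null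
   set survive countable unions of intervals. The functional L y = lim_{t -> b-} DG_int_a^t g (y)
   is linear as a limit of linear functionals and bounded by the uniform boundedness
   principle (proved by a gliding hump), so L - DG_int_a^c g is the Denjoy-Gel'fand integral
   of g on [c, b]. *)

(** * Finite sums and null sets *)

Lemma fsum_ext f g n : (forall i, (i < n)%nat -> f i = g i) -> fsum f n = fsum g n.
Proof.
  induction n as [|n IH]; intros Hfg; simpl; [reflexivity|].
  rewrite IH, (Hfg n) by (intros; try apply Hfg; lia). reflexivity.
Qed.

Lemma fsum_plus f g n : fsum (fun i => f i + g i) n = fsum f n + fsum g n.
Proof. induction n as [|n IH]; simpl; [ring|]. rewrite IH; ring. Qed.

Lemma fsum_le f g n : (forall i, (i < n)%nat -> f i <= g i) -> fsum f n <= fsum g n.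
Proof.
  induction n as [|n IH]; intros Hfg; simpl; [lra|].
  assert (fsum f n <= fsum g n) by (apply IH; intros; apply Hfg; lia).
  specialize (Hfg n (Nat.lt_succ_diag_r n)); lra.
Qed.

Lemma fsum_nonneg f n : (forall i, 0 <= f i) -> 0 <= fsum f n.
Proof. intros Hf; induction n as [|n IH]; simpl; [lra|]. specialize (Hf n); lra. Qed.

Lemma fsum_le_widen f n m : (forall i, 0 <= f i) -> (n <= m)%nat -> fsum f n <= fsum f m.
Proof. intros Hf Hnm; induction Hnm; simpl; [lra|]. specialize (Hf m); lra. Qed.

Lemma fsum_term_le f n i : (forall i, 0 <= f i) -> (i < n)%nat -> f i <= fsum f n.
Proof.
  intros Hf Hi. apply Rle_trans with (fsum f (S i)).
  - simpl. pose proof (fsum_nonneg f i Hf); lra.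
  - apply fsum_le_widen; auto.
Qed.

Lemma fsum_geometric eps n : fsum (fun k => eps / 2 ^ S k) n = eps - eps / 2 ^ n.
Proof.
  induction n as [|n IH]; [simpl; field|].
  change (fsum (fun k => eps / 2 ^ S k) (S n)) with (fsum (fun k => eps / 2 ^ S k) n + eps / 2 ^ S n).
  rewrite IH. simpl. field. apply pow_nonzero; lra.
Qed.

Lemma outer_le_mono (E E' : R -> Prop) c :
  (forall x, E' x -> E x) -> outer_le E c -> outer_le E' c.
Proof.
  intros Hsub HE eps Heps. destruct (HE eps Heps) as (an & bn & Hcov & Hab & Hsum).
  exists an, bn; repeat split; auto.
Qed.

Lemma null_mono (E E' : R -> Prop) : (forall x, E' x -> E x) -> null E -> null E'.
Proof. apply outer_le_mono. Qed.

Lemma null_single p : null (fun x => x = p).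
Proof.
  intros eps Heps.
  exists (fun k => p - eps / 2 ^ S (S k)), (fun k => p + eps / 2 ^ S (S k)).
  assert (Hpos : forall k, 0 < eps / 2 ^ k) by (intros; apply Rdiv_lt_0_compat, pow_lt; lra).
  repeat split.
  - intros x ->. exists O. specialize (Hpos 2%nat). lra.
  - intros k. specialize (Hpos (S (S k))). lra.
  - intros n. rewrite (fsum_ext _ (fun k => eps / 2 ^ S k)), fsum_geometric.
    + specialize (Hpos n). lra.
    + intros k _. simpl. field. apply pow_nonzero; lra.
Qed.

Fixpoint triangle (n : nat) : nat := match n with O => O | S n => (S n + triangle n)%nat end.

Definition pair_merge (f : nat -> nat -> R) (k : nat) : R := let (m, n) := of_nat k in f n m.

Lemma of_nat_triangle D n : (n <= D)%nat -> of_nat (n + triangle D) = ((D - n)%nat, n).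
Proof.
  intros HnD. rewrite <- (cancel_of_to ((D - n)%nat, n)). f_equal.
  unfold to_nat. replace (n + (D - n))%nat with D by lia. reflexivity.
Qed.

Lemma fsum_pair_merge f D :
  fsum (pair_merge f) (triangle D) = fsum (fun n => fsum (f n) (D - n)) D.
Proof.
  induction D as [|D IH]; [reflexivity|].
  assert (Hdiag : forall j, (j <= S D)%nat -> fsum (pair_merge f) (j + triangle D)
     = fsum (pair_merge f) (triangle D) + fsum (fun n => f n (D - n)%nat) j).
  { induction j as [|j IHj]; intros Hj; simpl; [ring|].
    rewrite IHj by lia. unfold pair_merge at 2. rewrite of_nat_triangle by lia. ring. }
  change (triangle (S D)) with (S D + triangle D)%nat.
  rewrite Hdiag, IH by lia.
  rewrite (fsum_ext (fun n => fsum (f n) (S D - n))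
                    (fun n => fsum (f n) (D - n) + f n (D - n)%nat)), fsum_plus.
  - simpl. rewrite Nat.sub_diag. simpl. ring.
  - intros i Hi. replace (S D - i)%nat with (S (D - i)) by lia. reflexivity.
Qed.

Lemma triangle_ge n : (n <= triangle n)%nat.
Proof. induction n; simpl; lia. Qed.

(* The n-th set is covered with total length [eps / 2 ^ S n]; the covers are merged
   along the Cantor pairing. *)
Lemma null_countable_union (B : nat -> R -> Prop) :
  (forall n, null (B n)) -> null (fun x => exists n, B n x).
Proof.
  intros HB eps Heps.
  assert (Hcov : forall n, exists ab : (nat -> R) * (nat -> R),
    (forall x, B n x -> exists m, fst ab m < x < snd ab m) /\ (forall m, fst ab m <= snd ab m) /\
    (forall N, fsum (fun m => snd ab m - fst ab m) N <= 0 + eps / 2 ^ S n)).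
  { intros n. destruct (HB n (eps / 2 ^ S n)) as (an & bn & H); [apply Rdiv_lt_0_compat, pow_lt; lra|].
    exists (an, bn); exact H. }
  destruct (choice _ Hcov) as [ab Hab].
  exists (pair_merge (fun n m => fst (ab n) m)), (pair_merge (fun n m => snd (ab n) m)).
  assert (Hlen : forall k, pair_merge (fun n m => snd (ab n) m) k - pair_merge (fun n m => fst (ab n) m) k
                         = pair_merge (fun n m => snd (ab n) m - fst (ab n) m) k).
  { intros k. unfold pair_merge. destruct (of_nat k). reflexivity. }
  repeat split.
  - intros x [n Hx]. destruct (proj1 (Hab n) x Hx) as [m Hm].
    exists (to_nat (m, n)). unfold pair_merge. rewrite cancel_of_to. exact Hm.
  - intros k. unfold pair_merge. destruct (of_nat k) as [m n]. apply Hab.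
  - intros N. rewrite (fsum_ext _ _ _ (fun k _ => Hlen k)).
    apply Rle_trans with (fsum (pair_merge (fun n m => snd (ab n) m - fst (ab n) m)) (triangle N)).
    { apply fsum_le_widen; [|apply triangle_ge].
      intros k. unfold pair_merge. destruct (of_nat k) as [m n].
      pose proof (proj1 (proj2 (Hab n)) m). lra. }
    rewrite fsum_pair_merge.
    apply Rle_trans with (fsum (fun n => eps / 2 ^ S n) N).
    { apply fsum_le. intros n _. pose proof (proj2 (proj2 (Hab n)) (N - n)%nat). lra. }
    rewrite fsum_geometric.
    assert (0 < eps / 2 ^ N) by (apply Rdiv_lt_0_compat, pow_lt; lra). lra.
Qed.

Lemma null_union2 (E1 E2 : R -> Prop) : null E1 -> null E2 -> null (fun x => E1 x \/ E2 x).
Proof.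
  intros H1 H2.
  apply null_mono with (fun x => exists n, match n with O => E1 | S _ => E2 end x).
  - intros x [Hx|Hx]; [exists O | exists 1%nat]; exact Hx.
  - apply null_countable_union. intros [|n]; assumption.
Qed.

Lemma null_range (w : nat -> R) : null (fun x => exists n, x = w n).
Proof. apply null_countable_union. intros n. apply null_single. Qed.

(** * Local properties of Denjoy primitives *)

Lemma density_zero_local (E E' : R -> Prop) x r0 : 0 < r0 ->
  (forall t, x - r0 < t < x + r0 -> E' t -> E t) -> density_zero E x -> density_zero E' x.
Proof.
  intros Hr0 Hsub HE eta Heta. destruct (HE eta Heta) as [delta [Hdelta Hout]].
  exists (Rmin delta r0). split; [apply Rmin_pos; lra|].
  intros r Hr. pose proof (Rmin_l delta r0); pose proof (Rmin_r delta r0).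
  apply outer_le_mono with (fun t => E t /\ x - r <= t <= x + r).
  - intros t [Ht1 Ht2]. split; [apply Hsub|]; auto; lra.
  - apply Hout; lra.
Qed.

Lemma ap_deriv_local F c d u v x l : c <= u -> u < x -> x < v -> v <= d ->
  ap_deriv F u v x l -> ap_deriv F c d x l.
Proof.
  intros Hcu Hux Hxv Hvd HF eps Heps.
  apply density_zero_local with (r0 := Rmin (x - u) (v - x))
    (E := fun t => u <= t <= v /\ t <> x /\ eps <= Rabs ((F t - F x) / (t - x) - l)).
  - apply Rmin_pos; lra.
  - intros t Ht (_ & Hne & Hq). pose proof (Rmin_l (x - u) (v - x)); pose proof (Rmin_r (x - u) (v - x)).
    repeat split; auto; lra.
  - apply HF; assumption.
Qed.

Lemma ap_deriv_restrict F c d u v x l : c <= u -> v <= d ->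
  ap_deriv F c d x l -> ap_deriv F u v x l.
Proof.
  intros Hcu Hvd HF eps Heps.
  apply density_zero_local with (r0 := 1) (E := fun t => c <= t <= d /\ t <> x /\ eps <= Rabs ((F t - F x) / (t - x) - l)).
  - lra.
  - intros t _ (Ht & Hne & Hq). repeat split; auto; lra.
  - apply HF; assumption.
Qed.

Lemma ap_deriv_shift F G C u v x l : (forall t, u <= t <= v -> G t = F t + C) -> u <= x <= v ->
  ap_deriv F u v x l -> ap_deriv G u v x l.
Proof.
  intros HGF Hx HF eps Heps.
  apply density_zero_local with (r0 := 1) (E := fun t => u <= t <= v /\ t <> x /\ eps <= Rabs ((F t - F x) / (t - x) - l)).
  - lra.
  - intros t _ (Ht & Hne & Hq). split; [|split]; auto.
    rewrite (HGF t), (HGF x) in Hq by assumption.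
    replace (F t - F x) with (F t + C - (F x + C)) by ring. exact Hq.
  - apply HF; assumption.
Qed.

Lemma AC_on_mono F (E E' : R -> Prop) : (forall x, E' x -> E x) -> AC_on F E -> AC_on F E'.
Proof.
  intros Hsub HF eps Heps. destruct (HF eps Heps) as [eta [Heta HAC]].
  exists eta; split; auto. intros n c d Hcd Hdisj Hlen. apply HAC; auto.
  intros i Hi. destruct (Hcd i Hi) as (? & ? & ?). auto.
Qed.

Lemma AC_on_shift F G C (E : R -> Prop) : (forall x, E x -> G x = F x + C) -> AC_on F E -> AC_on G E.
Proof.
  intros HGF HF eps Heps. destruct (HF eps Heps) as [eta [Heta HAC]].
  exists eta; split; auto. intros n c d Hcd Hdisj Hlen.
  rewrite (fsum_ext _ (fun i => Rabs (F (d i) - F (c i)))); [apply HAC; auto|].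
  intros i Hi. destruct (Hcd i Hi) as (? & ? & _). rewrite !HGF by assumption. f_equal; ring.
Qed.

Lemma AC_on_single F p : AC_on F (fun x => x = p).
Proof.
  intros eps Heps. exists 1; split; [lra|]. intros n c d Hcd _ _.
  rewrite (fsum_ext _ (fun _ => 0)).
  - clear Hcd. induction n as [|n IH]; simpl; lra.
  - intros i Hi. destruct (Hcd i Hi) as (-> & -> & _). rewrite Rminus_diag, Rabs_R0; reflexivity.
Qed.

Lemma cont_on_restrict F c d u v : c <= u -> v <= d -> cont_on F c d -> cont_on F u v.
Proof.
  intros Hcu Hvd HF x Hx eps Heps. destruct (HF x ltac:(lra) eps Heps) as [delta [Hdelta Hcont]].
  exists delta; split; auto. intros t Ht. apply Hcont; lra.
Qed.

Lemma cont_on_shift F G C u v : (forall t, u <= t <= v -> G t = F t + C) ->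
  cont_on F u v -> cont_on G u v.
Proof.
  intros HGF HF x Hx eps Heps. destruct (HF x Hx eps Heps) as [delta [Hdelta Hcont]].
  exists delta; split; auto. intros t Ht Htx. rewrite !HGF by assumption.
  replace (F t + C - (F x + C)) with (F t - F x) by ring. auto.
Qed.

Lemma cont_on_concat F u v w : cont_on F u v -> cont_on F v w -> cont_on F u w.
Proof.
  intros H1 H2 x Hx eps Heps.
  destruct (Rtotal_order x v) as [Hlt|[->|Hgt]].
  - destruct (H1 x ltac:(lra) eps Heps) as [delta [Hdelta Hcont]].
    exists (Rmin delta (v - x)); split; [apply Rmin_pos; lra|].
    intros t Ht Htx. pose proof (Rmin_l delta (v - x)); pose proof (Rmin_r delta (v - x)).
    apply Rabs_def2 in Htx. apply Hcont; [lra|apply Rabs_def1; lra].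
  - destruct (H1 v ltac:(lra) eps Heps) as [d1 [Hd1 Hc1]], (H2 v ltac:(lra) eps Heps) as [d2 [Hd2 Hc2]].
    exists (Rmin d1 d2); split; [apply Rmin_pos; lra|].
    intros t Ht Htx. pose proof (Rmin_l d1 d2); pose proof (Rmin_r d1 d2).
    destruct (Rle_dec t v); [apply Hc1 | apply Hc2]; lra.
  - destruct (H2 x ltac:(lra) eps Heps) as [delta [Hdelta Hcont]].
    exists (Rmin delta (x - v)); split; [apply Rmin_pos; lra|].
    intros t Ht Htx. pose proof (Rmin_l delta (x - v)); pose proof (Rmin_r delta (x - v)).
    apply Rabs_def2 in Htx. apply Hcont; [lra|apply Rabs_def1; lra].
Qed.

Lemma ACG_restrict F c d u v : c <= u -> v <= d -> ACG F c d -> ACG F u v.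
Proof.
  intros Hcu Hvd [Hcont [En (Hcov & Hin & HAC)]]. split; [eapply cont_on_restrict; eauto|].
  exists (fun n x => En n x /\ u <= x <= v). refine (conj _ (conj _ _)).
  - intros x Hx. destruct (Hcov x ltac:(lra)) as [n Hn]. exists n; auto.
  - intros n x [_ Hx]; exact Hx.
  - intros n. apply AC_on_mono with (En n); [tauto|apply HAC].
Qed.

Lemma ACG_shift F G C u v : (forall t, u <= t <= v -> G t = F t + C) -> ACG F u v -> ACG G u v.
Proof.
  intros HGF [Hcont [En (Hcov & Hin & HAC)]]. split; [eapply cont_on_shift; eauto|].
  exists En. refine (conj Hcov (conj Hin _)).
  intros n. apply AC_on_shift with F C; auto. intros x Hx. apply HGF, (Hin n x Hx).
Qed.

Lemma ACG_degenerate F p : ACG F p p.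
Proof.
  split.
  - intros x Hx eps Heps. exists 1; split; [lra|]. intros t Ht _.
    replace t with x by lra. rewrite Rminus_diag, Rabs_R0; assumption.
  - exists (fun _ x => x = p). refine (conj _ (conj _ _)).
    + intros x Hx; exists O; lra.
    + intros k x ->; lra.
    + intros k; apply AC_on_single.
Qed.

Lemma ACG_union F c d (u v : nat -> R) : c <= d -> cont_on F c d ->
  (forall k, c <= u k /\ v k <= d) -> (forall k, ACG F (u k) (v k)) ->
  (forall x, c <= x <= d -> x = d \/ exists k, u k <= x <= v k) -> ACG F c d.
Proof.
  intros Hcd Hcont Huv HACG Hcov. split; [assumption|].
  destruct (choice (fun k (En : nat -> R -> Prop) => (forall x, u k <= x <= v k -> exists n, En n x) /\
     (forall n x, En n x -> u k <= x <= v k) /\ (forall n, AC_on F (En n)))) as [E HE].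
  { intros k. apply HACG. }
  exists (fun m => match m with O => fun x => x = d | S m => let (k, n) := of_nat m in E k n end).
  refine (conj _ (conj _ _)).
  - intros x Hx. destruct (Hcov x Hx) as [->|[k Hk]]; [exists O; reflexivity|].
    destruct (proj1 (HE k) x Hk) as [n Hn]. exists (S (to_nat (k, n))). rewrite cancel_of_to; exact Hn.
  - intros [|m] x Hx; [lra|]. destruct (of_nat m) as [k n].
    pose proof (proj1 (proj2 (HE k)) n x Hx). pose proof (Huv k); lra.
  - intros [|m]; [apply AC_on_single|]. destruct (of_nat m) as [k n]. apply HE.
Qed.

Definition D_primitive (h F : R -> R) (c d : R) : Prop :=
  ACG F c d /\ null (fun x => c <= x <= d /\ ~ ap_deriv F c d x (h x)).

Lemma D_int_primitive h c d v : D_int h c d v -> exists F, D_primitive h F c d /\ v = F d - F c.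
Proof. intros [_ [F (HACG & Hnull & Hv)]]. exists F. split; [split|]; assumption. Qed.

Lemma D_primitive_int h F c d : c <= d -> D_primitive h F c d -> D_int h c d (F d - F c).
Proof. intros Hcd [HACG Hnull]. split; [assumption|]. exists F; auto. Qed.

Lemma D_primitive_restrict h F c d u v : c <= u -> v <= d ->
  D_primitive h F c d -> D_primitive h F u v.
Proof.
  intros Hcu Hvd [HACG Hnull]. split; [eapply ACG_restrict; eauto|].
  apply null_mono with (2 := Hnull). intros x [Hx Hnot]. split; [lra|].
  intros Hap. apply Hnot. eapply ap_deriv_restrict; eauto.
Qed.

Lemma D_primitive_shift h F G C u v : (forall t, u <= t <= v -> G t = F t + C) ->
  D_primitive h F u v -> D_primitive h G u v.
Proof.
  intros HGF [HACG Hnull]. split; [eapply ACG_shift; eauto|].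
  apply null_mono with (2 := Hnull). intros x [Hx Hnot]. split; [assumption|].
  intros Hap. apply Hnot. apply ap_deriv_shift with F C; assumption.
Qed.

Lemma D_primitive_degenerate h F p : D_primitive h F p p.
Proof.
  split; [apply ACG_degenerate|].
  apply null_mono with (2 := null_single p). intros x [Hx _]; lra.
Qed.

(* Off the countably many endpoints, a point of [[c, d]] is interior to some piece,
   where the approximate derivative is local. *)
Lemma D_primitive_union h F c d (u v : nat -> R) : c <= d -> cont_on F c d ->
  (forall k, c <= u k /\ v k <= d) -> (forall k, D_primitive h F (u k) (v k)) ->
  (forall x, c <= x <= d -> x = d \/ exists k, u k <= x <= v k) -> D_primitive h F c d.
Proof.
  intros Hcd Hcont Huv Hprim Hcov. split.
  { apply ACG_union with u v; auto. intros k; apply Hprim. }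
  apply null_mono with (fun x => (exists k, u k <= x <= v k /\ ~ ap_deriv F (u k) (v k) x (h x))
    \/ (x = d \/ (exists k, x = u k) \/ (exists k, x = v k))).
  - intros x [Hx Hnot]. destruct (Hcov x Hx) as [->|[k Hk]]; [right; left; reflexivity|].
    destruct (Req_dec x (u k)) as [Hu|Hu]; [right; right; left; exists k; exact Hu|].
    destruct (Req_dec x (v k)) as [Hv|Hv]; [right; right; right; exists k; exact Hv|].
    left. exists k. split; [assumption|]. intros Hap. apply Hnot.
    pose proof (Huv k). apply ap_deriv_local with (u k) (v k); auto; lra.
  - apply null_union2; [|apply null_union2; [apply null_single|apply null_union2; apply null_range]].
    apply null_countable_union. intros k. apply Hprim.
Qed.

Lemma D_primitive_concat h F u v w : u <= v -> v <= w ->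
  D_primitive h F u v -> D_primitive h F v w -> D_primitive h F u w.
Proof.
  intros Huv Hvw H1 H2.
  apply D_primitive_union with (fun k => match k with O => u | _ => v end)
                               (fun k => match k with O => v | _ => w end).
  - lra.
  - apply cont_on_concat with v; [apply H1|apply H2].
  - intros [|k]; lra.
  - intros [|k]; assumption.
  - intros x Hx. right. destruct (Rle_dec x v); [exists O | exists 1%nat]; lra.
Qed.

(** * Hake's theorem *)

Lemma exhausting_sequence a c b : a <= c < b -> exists s : nat -> R,
  s O = a /\ s 1%nat = c /\ (forall n, s n <= s (S n)) /\ (forall n, (1 <= n)%nat -> s n < s (S n)) /\
  (forall n, s n < b) /\ (forall x, x < b -> exists n, x < s n).
Proof.
  intros [Hac Hcb].
  exists (fun n => match n with O => a | S n => b - (b - c) / (INR n + 1) end).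
  assert (Hstep : forall n, (b - c) / (INR (S n) + 1) < (b - c) / (INR n + 1)).
  { intros n. rewrite S_INR. pose proof (pos_INR n).
    apply Rmult_lt_compat_l; [lra|]. apply Rinv_lt_contravar; nra. }
  assert (Hpos : forall n, 0 < (b - c) / (INR n + 1)).
  { intros n. pose proof (pos_INR n). apply Rdiv_lt_0_compat; lra. }
  repeat split.
  - simpl. field.
  - intros [|n]; [simpl; replace ((b - c) / (0 + 1)) with (b - c) by field; lra|].
    specialize (Hstep n); lra.
  - intros [|n] Hn; [lia|]. specialize (Hstep n); lra.
  - intros [|n]; [lra|]. specialize (Hpos n); lra.
  - intros x Hx. destruct (INR_unbounded ((b - c) / (b - x))) as [n Hn]. exists (S n).
    assert (Hlt : (b - c) / (INR n + 1) < b - x); [|lra].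
    pose proof (pos_INR n).
    apply Rmult_lt_reg_r with ((INR n + 1) / (b - x)); [apply Rdiv_lt_0_compat; lra|].
    replace ((b - c) / (INR n + 1) * ((INR n + 1) / (b - x))) with ((b - c) / (b - x)) by (field; lra).
    replace ((b - x) * ((INR n + 1) / (b - x))) with (INR n + 1) by (field; lra). lra.
Qed.

Lemma nondecreasing_seq_le (s : nat -> R) m n : (forall k, s k <= s (S k)) -> (m <= n)%nat -> s m <= s n.
Proof. intros Hs Hmn. induction Hmn as [|n Hmn IH]; [lra|]. specialize (Hs n); lra. Qed.

Section Gluing.
Variables (s : nat -> R) (F : nat -> R -> R).
Hypothesis s_le_S : forall n, s n <= s (S n).
Hypothesis s_lt_S : forall n, (1 <= n)%nat -> s n < s (S n).

Fixpoint glue_offset (n : nat) : R :=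
  match n with O => 0 | S n => glue_offset n + F n (s (S n)) - F n (s n) end.

(* [F n] is used on [[s n, s (S n)]], shifted so that consecutive pieces match at the
   common endpoint; the choice of [n] is irrelevant by [glue_piece_consistent]. *)
Definition glued (x : R) : R :=
  let n := epsilon (inhabits O) (fun n => s n <= x <= s (S n)) in
  glue_offset n + F n x - F n (s n).

Lemma glue_piece_consistent m n x : (m < n)%nat -> s m <= x <= s (S m) -> s n <= x <= s (S n) ->
  glue_offset m + F m x - F m (s m) = glue_offset n + F n x - F n (s n).
Proof.
  intros Hmn Hm Hn. destruct (Nat.eq_dec n (S m)) as [->|Hne].
  - replace x with (s (S m)) by lra. simpl. ring.
  - assert (Hlt : s (S m) < s n); [|lra].
    apply Rlt_le_trans with (s (S (S m))); [apply s_lt_S; lia|].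
    apply nondecreasing_seq_le; [assumption|lia].
Qed.

Lemma glued_eq n x : s n <= x <= s (S n) -> glued x = glue_offset n + F n x - F n (s n).
Proof.
  intros Hx. unfold glued. cbv zeta.
  set (m := epsilon _ _). assert (Hm : s m <= x <= s (S m)).
  { apply (epsilon_spec (inhabits O) (fun n => s n <= x <= s (S n))). exists n; exact Hx. }
  clearbody m. destruct (Nat.lt_total m n) as [Hlt|[->|Hlt]].
  - apply glue_piece_consistent; assumption.
  - reflexivity.
  - symmetry; apply glue_piece_consistent; assumption.
Qed.

Variable h : R -> R.
Hypothesis F_primitive : forall n, D_primitive h (F n) (s n) (s (S n)).

Lemma glued_primitive n : D_primitive h glued (s O) (s n).
Proof.
  induction n as [|n IH]; [apply D_primitive_degenerate|].
  apply D_primitive_concat with (s n); [apply nondecreasing_seq_le; auto; lia|auto|auto|].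
  apply D_primitive_shift with (F n) (glue_offset n - F n (s n)); [|apply F_primitive].
  intros t Ht. rewrite (glued_eq n t Ht). ring.
Qed.
End Gluing.

Definition left_limit (f : R -> R) (a b l : R) : Prop :=
  forall eps, 0 < eps -> exists delta, 0 < delta /\
    forall t, a <= t < b -> b - delta < t -> Rabs (f t - l) < eps.

Lemma left_limit_unique f a b l1 l2 : a < b -> left_limit f a b l1 -> left_limit f a b l2 -> l1 = l2.
Proof.
  intros Hab H1 H2. destruct (Req_dec l1 l2) as [|Hne]; [assumption|exfalso].
  set (eps := Rabs (l1 - l2) / 2). assert (Heps : 0 < eps) by (apply Rdiv_lt_0_compat; [apply Rabs_pos_lt|]; lra).
  destruct (H1 eps Heps) as [d1 [Hd1 Hl1]], (H2 eps Heps) as [d2 [Hd2 Hl2]].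
  set (t := b - Rmin (Rmin d1 d2) (b - a) / 2).
  pose proof (Rmin_l (Rmin d1 d2) (b - a)); pose proof (Rmin_r (Rmin d1 d2) (b - a));
  pose proof (Rmin_l d1 d2); pose proof (Rmin_r d1 d2).
  assert (0 < Rmin (Rmin d1 d2) (b - a)) by (repeat apply Rmin_pos; lra).
  specialize (Hl1 t ltac:(unfold t; lra) ltac:(unfold t; lra)).
  specialize (Hl2 t ltac:(unfold t; lra) ltac:(unfold t; lra)).
  pose proof (Rabs_triang (f t - l2) (- (f t - l1))) as Htri. rewrite Rabs_Ropp in Htri.
  replace (f t - l2 + - (f t - l1)) with (l1 - l2) in Htri by ring. unfold eps in *. lra.
Qed.

Lemma left_limit_plus f g a b l1 l2 : left_limit f a b l1 -> left_limit g a b l2 ->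
  left_limit (fun t => f t + g t) a b (l1 + l2).
Proof.
  intros Hf Hg eps Heps.
  destruct (Hf (eps / 2) ltac:(lra)) as [d1 [Hd1 H1]], (Hg (eps / 2) ltac:(lra)) as [d2 [Hd2 H2]].
  exists (Rmin d1 d2); split; [apply Rmin_pos; assumption|]. intros t Ht Htd.
  pose proof (Rmin_l d1 d2); pose proof (Rmin_r d1 d2).
  specialize (H1 t Ht ltac:(lra)). specialize (H2 t Ht ltac:(lra)).
  replace (f t + g t - (l1 + l2)) with ((f t - l1) + (g t - l2)) by ring.
  pose proof (Rabs_triang (f t - l1) (g t - l2)). lra.
Qed.

Lemma left_limit_scal f r a b l : left_limit f a b l -> left_limit (fun t => r * f t) a b (r * l).
Proof.
  intros Hf eps Heps.
  destruct (Hf (eps / (Rabs r + 1))) as [delta [Hdelta Hd]].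
  { apply Rdiv_lt_0_compat; [|pose proof (Rabs_pos r)]; lra. }
  exists delta; split; [assumption|]. intros t Ht Htd. specialize (Hd t Ht Htd).
  rewrite <- Rmult_minus_distr_l, Rabs_mult. pose proof (Rabs_pos r). pose proof (Rabs_pos (f t - l)).
  apply Rle_lt_trans with ((Rabs r + 1) * Rabs (f t - l)); [nra|].
  apply Rmult_lt_reg_r with (/ (Rabs r + 1)); [apply Rinv_0_lt_compat; lra|].
  replace ((Rabs r + 1) * Rabs (f t - l) * / (Rabs r + 1)) with (Rabs (f t - l)) by (field; lra).
  exact Hd.
Qed.

Lemma cont_on_left_limit F a b : a < b -> cont_on F a b -> left_limit F a b (F b).
Proof.
  intros Hab HF eps Heps. destruct (HF b ltac:(lra) eps Heps) as [delta [Hdelta Hcont]].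
  exists delta; split; [assumption|]. intros t Ht Htd. apply Hcont; [lra|].
  rewrite Rabs_left; lra.
Qed.

Lemma D_primitive_left_closure h H a b (s : nat -> R) : (forall n, a <= s n < b) ->
  (forall x, x < b -> exists n, x < s n) -> (forall n, D_primitive h H a (s n)) ->
  left_limit H a b (H b) -> D_primitive h H a b.
Proof.
  intros Hs Hcov Hprim Hlim.
  assert (Hab : a < b) by (destruct (Hs O); lra).
  assert (Hcont : cont_on H a b).
  { intros x Hx eps Heps. destruct (Rlt_le_dec x b) as [Hxb|Hxb].
    - destruct (Hcov x Hxb) as [n Hn].
      destruct (proj1 (Hprim n)) as [Hc _]. destruct (Hc x ltac:(lra) eps Heps) as [delta [Hdelta Hd]].
      exists (Rmin delta (s n - x)); split; [apply Rmin_pos; lra|].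
      intros t Ht Htx. pose proof (Rmin_l delta (s n - x)); pose proof (Rmin_r delta (s n - x)).
      apply Rabs_def2 in Htx. apply Hd; [lra|apply Rabs_def1; lra].
    - replace x with b by lra. destruct (Hlim eps Heps) as [delta [Hdelta Hd]].
      exists delta; split; [assumption|]. intros t Ht Htb.
      destruct (Req_dec t b) as [->|Htb']; [rewrite Rminus_diag, Rabs_R0; lra|].
      apply Rabs_def2 in Htb. apply Hd; lra. }
  apply D_primitive_union with (fun _ => a) s; [lra|assumption| |assumption|].
  - intros n. specialize (Hs n). lra.
  - intros x Hx. destruct (Rlt_le_dec x b) as [Hxb|Hxb]; [right|left; lra].
    destruct (Hcov x Hxb) as [n Hn]. exists n. lra.
Qed.

Definition D_int_tends_to (h : R -> R) (a b L : R) : Prop :=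
  forall eps, 0 < eps -> exists delta, 0 < delta /\
    forall t, a <= t < b -> b - delta < t -> forall v, D_int h a t v -> Rabs (v - L) < eps.

Lemma D_int_tends_to_left_limit h F a b L : D_int_tends_to h a b L ->
  (forall t, a <= t < b -> D_primitive h F a t) -> left_limit (fun t => F t - F a) a b L.
Proof.
  intros Hlim Hprim eps Heps. destruct (Hlim eps Heps) as [delta [Hdelta Hd]].
  exists delta; split; [assumption|]. intros t Ht Htd.
  apply (Hd t Ht Htd). apply D_primitive_int; [lra|apply Hprim, Ht].
Qed.

Lemma D_int_tends_to_unique h a b v L : a < b -> D_int h a b v -> D_int_tends_to h a b L -> v = L.
Proof.
  intros Hab Hv Hlim. destruct (D_int_primitive _ _ _ _ Hv) as [G [HG ->]].
  apply left_limit_unique with (fun t => G t - G a) a b; [assumption| |].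
  - apply (cont_on_left_limit (fun t => G t - G a)); [assumption|].
    apply cont_on_shift with G (- G a); [intros; ring|apply HG].
  - apply D_int_tends_to_left_limit with h; [assumption|].
    intros t Ht. apply D_primitive_restrict with a b; auto; lra.
Qed.

(* The piece on [[a, c]] is the given primitive, so the glued primitive [G] satisfies
   [G c - G a = K] without any uniqueness theorem for Denjoy primitives. *)
Theorem D_int_Hake h a b c K L : a <= c < b -> D_int h a c K ->
  (forall t, a <= t < b -> D_integrable h a t) -> D_int_tends_to h a b L -> D_int h c b (L - K).
Proof.
  intros Hc HK Hint Hlim.
  destruct (exhausting_sequence a c b Hc) as (s & Hs0 & Hs1 & Hle & Hlt & Hsb & Hcov).
  assert (Hsa : forall n, a <= s n) by (intros n; rewrite <- Hs0; apply nondecreasing_seq_le; auto; lia).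
  destruct (choice (fun n (Fn : R -> R) => D_primitive h Fn (s n) (s (S n)) /\
                                           (n = O -> K = Fn c - Fn a))) as [F HF].
  { intros [|n].
    - destruct (D_int_primitive _ _ _ _ HK) as [F0 [HF0 HK0]]. exists F0. rewrite Hs0, Hs1. auto.
    - destruct (Hint (s (S (S n))) (conj (Hsa _) (Hsb _))) as [v Hv].
      destruct (D_int_primitive _ _ _ _ Hv) as [Fn [HFn _]]. exists Fn.
      split; [apply D_primitive_restrict with a (s (S (S n))); [apply Hsa|lra|exact HFn]|discriminate]. }
  set (G := glued s F).
  assert (HG0 : forall x, a <= x <= c -> G x = F O x - F O a).
  { intros x Hx. unfold G. rewrite (glued_eq s F Hle Hlt O x); [simpl; rewrite Hs0; ring|lra]. }
  set (H := fun x => if Rlt_dec x b then G x else L).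
  assert (HHa : H a = 0) by (unfold H; destruct Rlt_dec; [rewrite HG0; lra|lra]).
  assert (HHprim : forall n, D_primitive h H a (s n)).
  { intros n. apply D_primitive_shift with G 0.
    - intros t Ht. unfold H. destruct Rlt_dec; [ring|pose proof (Hsb n); lra].
    - rewrite <- Hs0. apply glued_primitive; [auto|auto|apply HF]. }
  assert (HHab : D_primitive h H a b).
  { apply D_primitive_left_closure with s; auto.
    replace (H b) with L by (unfold H; destruct Rlt_dec; lra).
    assert (HHlim : left_limit (fun t => H t - H a) a b L).
    { apply D_int_tends_to_left_limit with h; [assumption|].
      intros t Ht. destruct (Hcov t (proj2 Ht)) as [n Hn]. apply D_primitive_restrict with a (s n); auto; lra. }
    intros eps Heps. destruct (HHlim eps Heps) as [delta [Hdelta Hd]].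
    exists delta; split; [assumption|]. intros t Ht Htd.
    specialize (Hd t Ht Htd). rewrite HHa, Rminus_0_r in Hd. exact Hd. }
  replace (L - K) with (H b - H c).
  - apply D_primitive_int; [lra|]. apply D_primitive_restrict with a b; auto; lra.
  - unfold H. destruct (Rlt_dec b b); [lra|]. destruct (Rlt_dec c b); [|lra].
    rewrite HG0, (proj2 (HF O)); [ring|reflexivity|lra].
Qed.

(** * Uniform boundedness *)

Section BanachSpace.
Variable X : BanachSpace.
Local Notation "x +: y" := (bs_add X x y) (at level 50, left associativity).
Local Notation "-: x" := (bs_opp X x) (at level 35).
Local Notation "0:" := (bs_zero X).
Local Notation nrm := (bs_norm X).

Lemma bs_add_0_l x : 0: +: x = x.
Proof. rewrite bs_add_comm. apply bs_add_zero. Qed.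

Lemma bs_add_cancel_r x y z : x +: z = y +: z -> x = y.
Proof.
  intros H. rewrite <- (bs_add_zero X x), <- (bs_add_zero X y), <- (bs_add_opp X z), !bs_add_assoc, H.
  reflexivity.
Qed.

Lemma bs_scal_0 x : bs_scal X 0 x = 0:.
Proof.
  apply bs_add_cancel_r with (bs_scal X 0 x).
  rewrite bs_add_0_l, <- bs_scal_distr_r, Rplus_0_l. reflexivity.
Qed.

Lemma bs_opp_scal x : -: x = bs_scal X (-1) x.
Proof.
  apply bs_add_cancel_r with x. rewrite (bs_add_comm X (-: x)), bs_add_opp.
  rewrite <- (bs_scal_one X x) at 2. rewrite <- bs_scal_distr_r.
  replace (-1 + 1) with 0 by ring. rewrite bs_scal_0. reflexivity.
Qed.

Lemma bs_norm_0 : nrm 0: = 0.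
Proof. rewrite <- (bs_scal_0 0:), bs_norm_scal, Rabs_R0. ring. Qed.

Lemma bs_norm_opp x : nrm (-: x) = nrm x.
Proof.
  rewrite bs_opp_scal, bs_norm_scal. replace (Rabs (-1)) with 1 by (rewrite Rabs_left; lra). ring.
Qed.

Lemma bs_norm_ge0 x : 0 <= nrm x.
Proof. pose proof (bs_norm_triangle X x (-: x)). rewrite bs_add_opp, bs_norm_0, bs_norm_opp in H. lra. Qed.

Lemma bs_norm_sub_sym x y : nrm (x +: -: y) = nrm (y +: -: x).
Proof.
  rewrite <- bs_norm_opp, !bs_opp_scal, bs_scal_distr_l, bs_scal_assoc, bs_add_comm.
  replace (-1 * -1) with 1 by ring. rewrite bs_scal_one. reflexivity.
Qed.

Lemma bs_norm_sub_triangle x y z : nrm (x +: -: z) <= nrm (x +: -: y) + nrm (y +: -: z).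
Proof.
  replace (x +: -: z) with ((x +: -: y) +: (y +: -: z)); [apply bs_norm_triangle|].
  rewrite bs_add_assoc, <- (bs_add_assoc X x (-: y) y), (bs_add_comm X (-: y) y), bs_add_opp, bs_add_zero.
  reflexivity.
Qed.

Lemma bs_add_sub_l x v : (x +: v) +: -: x = v.
Proof. rewrite (bs_add_comm X x v), <- bs_add_assoc, bs_add_opp, bs_add_zero. reflexivity. Qed.

Lemma bs_add_sub x y : x +: (y +: -: x) = y.
Proof. rewrite (bs_add_comm X y), bs_add_assoc, bs_add_opp, bs_add_0_l. reflexivity. Qed.

Lemma dual_add f x y : is_dual X f -> f (x +: y) = f x + f y.
Proof. intros [Hadd _]; apply Hadd. Qed.

Lemma dual_scal f r x : is_dual X f -> f (bs_scal X r x) = r * f x.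
Proof. intros [_ [Hscal _]]; apply Hscal. Qed.

Lemma dual_opp f x : is_dual X f -> f (-: x) = - f x.
Proof. intros Hf. rewrite bs_opp_scal, dual_scal by assumption. ring. Qed.

Lemma dual_zero f : is_dual X f -> f 0: = 0.
Proof. intros Hf. rewrite <- (bs_scal_0 0:), dual_scal by assumption. ring. Qed.

Lemma le_of_lt_plus_eps p q : (forall eps, 0 < eps -> p < q + eps) -> p <= q.
Proof. intros H. destruct (Rle_dec p q) as [|Hpq]; [assumption|]. specialize (H ((p - q) / 2)). lra. Qed.

(* [N] is the operator norm of [f], obtained as a supremum over the unit ball. *)
Lemma dual_norming f : is_dual X f -> exists N, 0 <= N /\ (forall x, Rabs (f x) <= N * nrm x) /\
  exists w, nrm w <= 1 /\ 2 / 3 * N <= Rabs (f w).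
Proof.
  intros Hf. pose proof Hf as (_ & _ & M & HM).
  set (E := fun r => exists x, nrm x <= 1 /\ r = Rabs (f x)).
  assert (Hbound : bound E).
  { exists (Rmax M 0). intros r [x [Hx ->]]. eapply Rle_trans; [apply HM|].
    pose proof (bs_norm_ge0 x); pose proof (Rmax_l M 0); pose proof (Rmax_r M 0).
    apply Rle_trans with (Rmax M 0 * nrm x); [apply Rmult_le_compat_r|]; nra. }
  assert (HE0 : E 0) by (exists 0:; rewrite bs_norm_0, dual_zero, Rabs_R0 by assumption; split; lra).
  destruct (completeness E Hbound (ex_intro _ 0 HE0)) as [N [HNub HNlub]].
  assert (HN0 : 0 <= N) by (apply HNub, HE0).
  exists N; split; [assumption|split].
  - intros x. destruct (Req_dec (nrm x) 0) as [Hx0|Hx0].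
    { rewrite (bs_norm_eq0 X x Hx0), dual_zero, Rabs_R0, bs_norm_0 by assumption. lra. }
    pose proof (bs_norm_ge0 x).
    assert (Hunit : E (Rabs (f (bs_scal X (/ nrm x) x)))).
    { eexists; split; [|reflexivity]. rewrite bs_norm_scal, Rabs_inv, Rabs_right, Rinv_l by lra. lra. }
    apply HNub in Hunit. rewrite dual_scal, Rabs_mult, Rabs_inv, (Rabs_right (nrm x)) in Hunit by (auto; lra).
    apply Rmult_le_reg_l with (/ nrm x); [apply Rinv_0_lt_compat; lra|].
    replace (/ nrm x * (N * nrm x)) with N by (field; assumption). lra.
  - destruct (Req_dec N 0) as [HN|HN].
    { exists 0:. rewrite bs_norm_0, dual_zero, Rabs_R0, HN by assumption. lra. }
    destruct (classic (exists w, nrm w <= 1 /\ 2 / 3 * N <= Rabs (f w))) as [|Hno]; [assumption|].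
    exfalso. assert (N <= 2 / 3 * N); [|lra].
    apply HNlub. intros r [x [Hx ->]]. destruct (Rle_dec (2 / 3 * N) (Rabs (f x))); [|lra].
    exfalso; apply Hno; exists x; auto.
Qed.

Lemma geometric_cauchy_limit (x : nat -> X) r : 0 <= r < 1 ->
  (forall k, nrm (x (S k) +: -: x k) <= r ^ k) ->
  exists l, forall k, nrm (l +: -: x k) <= r ^ k / (1 - r).
Proof.
  intros Hr Hstep.
  assert (Hpow : forall k, 0 <= r ^ k) by (intros; apply pow_le; lra).
  assert (Hdist : forall k m, (k <= m)%nat -> nrm (x m +: -: x k) <= (r ^ k - r ^ m) / (1 - r)).
  { intros k m Hkm. induction Hkm as [|m Hkm IH].
    - rewrite bs_add_opp, bs_norm_0. unfold Rdiv. rewrite Rminus_diag. lra.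
    - eapply Rle_trans; [apply bs_norm_sub_triangle with (y := x m)|].
      replace ((r ^ k - r ^ S m) / (1 - r)) with (r ^ m + (r ^ k - r ^ m) / (1 - r)) by (simpl; field; lra).
      specialize (Hstep m). lra. }
  assert (Hdist' : forall k m, (k <= m)%nat -> nrm (x m +: -: x k) <= r ^ k / (1 - r)).
  { intros k m Hkm. specialize (Hdist k m Hkm). specialize (Hpow m).
    apply Rle_trans with (1 := Hdist). apply Rmult_le_compat_r; [apply Rlt_le, Rinv_0_lt_compat|]; lra. }
  destruct (bs_complete X x) as [l Hl].
  { intros eps Heps. destruct (pow_lt_1_zero r ltac:(rewrite Rabs_right; lra) (eps * (1 - r))) as [N HN];
      [nra|].
    assert (Hsmall : forall n, (N <= n)%nat -> r ^ n / (1 - r) < eps).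
    { intros n Hn. specialize (HN n Hn). rewrite Rabs_right in HN by (apply Rle_ge, Hpow).
      apply Rmult_lt_reg_r with (1 - r); [lra|]. unfold Rdiv. rewrite Rmult_assoc, Rinv_l; lra. }
    exists N. intros m n Hm Hn. destruct (Nat.le_ge_cases n m) as [Hnm|Hmn].
    - specialize (Hdist' n m Hnm). specialize (Hsmall n Hn). lra.
    - rewrite bs_norm_sub_sym. specialize (Hdist' m n Hmn). specialize (Hsmall m Hm). lra. }
  exists l. intros k. apply le_of_lt_plus_eps. intros eps Heps.
  destruct (Hl eps Heps) as [N HN]. specialize (HN (max N k) ltac:(lia)).
  pose proof (Hdist' k (max N k) ltac:(lia)). pose proof (bs_norm_sub_triangle l (x (max N k)) (x k)).
  rewrite bs_norm_sub_sym in HN. lra.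
Qed.

Lemma exists_sign_step f x u : is_dual X f ->
  exists y, nrm (y +: -: x) = nrm u /\ Rabs (f u) <= Rabs (f y).
Proof.
  intros Hf. destruct (Rle_dec (Rabs (f (x +: -: u))) (Rabs (f (x +: u)))) as [Hle|Hgt].
  - exists (x +: u). rewrite bs_add_sub_l. split; [reflexivity|].
    rewrite !dual_add, dual_opp in Hle by assumption. rewrite dual_add by assumption.
    revert Hle. unfold Rabs; repeat destruct Rcase_abs; lra.
  - exists (x +: -: u). rewrite bs_add_sub_l, bs_norm_opp. split; [reflexivity|].
    apply Rnot_le_lt in Hgt. rewrite !dual_add, dual_opp in * by assumption.
    revert Hgt. unfold Rabs; repeat destruct Rcase_abs; lra.
Qed.

(* Each [x (S k)] moves [x k] by [3^-k w k] in the direction increasing [|T k|]; the later,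
   geometrically smaller moves cannot undo the gain at step [k]. *)
Lemma gliding_hump (T : nat -> X -> R) (N : nat -> R) (w : nat -> X) :
  (forall k, is_dual X (T k)) -> (forall k, 0 <= N k) -> (forall k x, Rabs (T k x) <= N k * nrm x) ->
  (forall k, nrm (w k) <= 1) -> (forall k, 2 / 3 * N k <= Rabs (T k (w k))) ->
  exists l, forall k, (/ 3) ^ k * N k / 6 <= Rabs (T k l).
Proof.
  intros HT HN0 HN Hw HTw.
  assert (Hpow : forall k, 0 < (/ 3) ^ k) by (intros; apply pow_lt; lra).
  assert (Hstep : forall k x, exists y, nrm (y +: -: x) <= (/ 3) ^ k /\
                                        (/ 3) ^ k * (2 / 3 * N k) <= Rabs (T k y)).
  { intros k x. destruct (exists_sign_step (T k) x (bs_scal X ((/ 3) ^ k) (w k)) (HT k)) as [y [Hy HTy]].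
    exists y. rewrite Hy, bs_norm_scal. rewrite dual_scal, Rabs_mult in HTy by apply HT.
    rewrite Rabs_right in * by (apply Rle_ge, Rlt_le, Hpow).
    specialize (Hpow k); specialize (Hw k); specialize (HTw k). split; nra. }
  destruct (choice (fun (p : nat * X) y => nrm (y +: -: snd p) <= (/ 3) ^ fst p /\
     (/ 3) ^ fst p * (2 / 3 * N (fst p)) <= Rabs (T (fst p) y))) as [next Hnext].
  { intros [k y]. apply Hstep. }
  set (x := fix x k := match k with O => 0: | S k => next (k, x k) end).
  destruct (geometric_cauchy_limit x (/ 3)) as [l Hl]; [lra|intros k; apply (Hnext (k, x k))|].
  exists l. intros k.
  assert (Htail : Rabs (T k (l +: -: x (S k))) <= N k * ((/ 3) ^ k / 2)).
  { eapply Rle_trans; [apply HN|]. apply Rmult_le_compat_l; [apply HN0|].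
    specialize (Hl (S k)). replace ((/ 3) ^ k / 2) with ((/ 3) ^ S k / (1 - / 3)) by (simpl; field). exact Hl. }
  assert (Hsplit : T k l = T k (x (S k)) + T k (l +: -: x (S k))).
  { rewrite <- dual_add by apply HT. rewrite bs_add_sub. reflexivity. }
  pose proof (proj2 (Hnext (k, x k))) as Hgain. simpl in Hgain. change (next (k, x k)) with (x (S k)) in Hgain.
  pose proof (Rabs_triang (T k l) (- T k (l +: -: x (S k)))) as Htri.
  rewrite Rabs_Ropp in Htri. replace (T k l + - T k (l +: -: x (S k))) with (T k (x (S k))) in Htri by lra.
  replace ((/ 3) ^ k * (2 / 3 * N k)) with (4 * ((/ 3) ^ k * N k / 6)) in Hgain by field.
  replace (N k * ((/ 3) ^ k / 2)) with (3 * ((/ 3) ^ k * N k / 6)) in Htail by field.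
  lra.
Qed.

Theorem uniform_boundedness (T : nat -> X -> R) : (forall n, is_dual X (T n)) ->
  (forall y, exists B, forall n, Rabs (T n y) <= B) ->
  exists M, forall n y, Rabs (T n y) <= M * nrm y.
Proof.
  intros HT Hpw.
  destruct (choice (fun n (Nw : R * X) => 0 <= fst Nw /\ (forall x, Rabs (T n x) <= fst Nw * nrm x) /\
     nrm (snd Nw) <= 1 /\ 2 / 3 * fst Nw <= Rabs (T n (snd Nw)))) as [Nw HNw].
  { intros n. destruct (dual_norming (T n) (HT n)) as (N & HN0 & HN & w & Hw & HTw).
    exists (N, w). auto. }
  destruct (classic (exists M, forall n y, Rabs (T n y) <= M * nrm y)) as [|Hunb]; [assumption|exfalso].
  assert (Hlarge : forall k, exists n, 6 * 3 ^ k * INR k < fst (Nw n)).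
  { intros k. destruct (classic (exists n, 6 * 3 ^ k * INR k < fst (Nw n))) as [|Hsmall]; [assumption|].
    exfalso. apply Hunb. exists (6 * 3 ^ k * INR k). intros n y.
    eapply Rle_trans; [apply HNw|]. apply Rmult_le_compat_r; [apply bs_norm_ge0|].
    apply Rnot_lt_le. intros Hn. apply Hsmall. exists n. exact Hn. }
  destruct (choice _ Hlarge) as [idx Hidx].
  destruct (gliding_hump (fun k => T (idx k)) (fun k => fst (Nw (idx k))) (fun k => snd (Nw (idx k))))
    as [l Hl]; try (intros; apply HNw); [intros; apply HT|].
  destruct (Hpw l) as [B HB]. destruct (INR_unbounded B) as [k Hk].
  specialize (Hl k). specialize (Hidx k). specialize (HB (idx k)). simpl in Hl.
  assert (Hcancel : (/ 3) ^ k * 3 ^ k = 1) by (rewrite <- Rpow_mult_distr, Rinv_l, pow1; lra).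
  assert (Hpow : 0 < (/ 3) ^ k) by (apply pow_lt; lra).
  assert (INR k < (/ 3) ^ k * fst (Nw (idx k)) / 6); [|lra].
  replace (INR k) with ((/ 3) ^ k * 3 ^ k * INR k) at 1 by (rewrite Hcancel; ring).
  replace ((/ 3) ^ k * 3 ^ k * INR k) with ((/ 3) ^ k * (6 * 3 ^ k * INR k) / 6) by field.
  apply Rmult_lt_compat_r; [lra|]. apply Rmult_lt_compat_l; assumption.
Qed.
End BanachSpace.

(** * The Denjoy-Gel'fand integral *)

Section ExhaustingSequence.
Variables (s : nat -> R) (a b : R).
Hypothesis s_in : forall n, a <= s n < b.
Hypothesis s_le_S : forall n, s n <= s (S n).
Hypothesis s_exhausts : forall x, x < b -> exists n, x < s n.

Lemma left_limit_along f l : left_limit f a b l ->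
  forall eps, 0 < eps -> exists N, forall n, (N <= n)%nat -> Rabs (f (s n) - l) < eps.
Proof.
  intros Hf eps Heps. destruct (Hf eps Heps) as [delta [Hdelta Hd]].
  destruct (s_exhausts (b - delta)) as [N HN]; [lra|].
  exists N. intros n Hn. apply Hd; [apply s_in|].
  pose proof (nondecreasing_seq_le s N n s_le_S Hn). lra.
Qed.

Lemma left_limit_along_bounded f l : left_limit f a b l -> exists B, forall n, Rabs (f (s n)) <= B.
Proof.
  intros Hf. destruct (left_limit_along f l Hf 1) as [N HN]; [lra|].
  exists (fsum (fun k => Rabs (f (s k))) N + (Rabs l + 1)). intros n.
  assert (Hsum := fsum_nonneg (fun k => Rabs (f (s k))) N (fun k => Rabs_pos _)).
  destruct (Nat.lt_ge_cases n N) as [Hn|Hn].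
  - pose proof (fsum_term_le (fun k => Rabs (f (s k))) N n (fun k => Rabs_pos _) Hn).
    pose proof (Rabs_pos l). simpl in *. lra.
  - specialize (HN n Hn). pose proof (Rabs_triang (f (s n) - l) l).
    replace (f (s n) - l + l) with (f (s n)) in H by ring. lra.
Qed.

Lemma left_limit_along_le f l C : left_limit f a b l -> (forall n, Rabs (f (s n)) <= C) -> Rabs l <= C.
Proof.
  intros Hf HC. apply le_of_lt_plus_eps. intros eps Heps.
  destruct (left_limit_along f l Hf eps Heps) as [N HN]. specialize (HN N (le_n N)). specialize (HC N).
  pose proof (Rabs_triang (f (s N)) (- (f (s N) - l))). rewrite Rabs_Ropp in H.
  replace (f (s N) + - (f (s N) - l)) with l in H by ring. lra.
Qed.
End ExhaustingSequence.

Lemma ev_is_dual {X : BanachSpace} (f : dual X) : is_dual X (ev f).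
Proof. exact (proj2_sig f). Qed.

(* Boundedness of the pointwise limit is the Banach–Steinhaus theorem, applied along a
   sequence increasing to [b]. *)
Theorem left_limit_dual (X : BanachSpace) (J : R -> dual X) (L : X -> R) a b : a < b ->
  (forall y, left_limit (fun t => ev (J t) y) a b (L y)) -> is_dual X L.
Proof.
  intros Hab HL. split; [|split].
  - intros x y. apply left_limit_unique with (fun t => ev (J t) (bs_add X x y)) a b; [assumption|apply HL|].
    replace (fun t => ev (J t) (bs_add X x y)) with (fun t => ev (J t) x + ev (J t) y)
      by (extensionality t; symmetry; apply dual_add, ev_is_dual).
    apply left_limit_plus; apply HL.
  - intros r x. apply left_limit_unique with (fun t => ev (J t) (bs_scal X r x)) a b; [assumption|apply HL|].
    replace (fun t => ev (J t) (bs_scal X r x)) with (fun t => r * ev (J t) x)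
      by (extensionality t; symmetry; apply dual_scal, ev_is_dual).
    apply left_limit_scal, HL.
  - destruct (exhausting_sequence a a b) as (s & Hs0 & _ & Hle & _ & Hsb & Hcov); [lra|].
    assert (Hs : forall n, a <= s n < b).
    { intros n. split; [rewrite <- Hs0; apply nondecreasing_seq_le; auto; lia|apply Hsb]. }
    destruct (uniform_boundedness X (fun n => ev (J (s n)))) as [M HM].
    { intros n. apply ev_is_dual. }
    { intros y. apply (left_limit_along_bounded s a b Hs Hle Hcov (fun t => ev (J t) y) (L y)), HL. }
    exists M. intros y. apply (left_limit_along_le s a b Hs Hle Hcov (fun t => ev (J t) y)); auto.
Qed.

Lemma is_dual_zero (X : BanachSpace) : is_dual X (fun _ => 0).
Proof. split; [|split]; [intros; ring|intros; ring|]. exists 0. intros. rewrite Rabs_R0. lra. Qed.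

Lemma is_dual_sub (X : BanachSpace) f g : is_dual X f -> is_dual X g -> is_dual X (fun y => f y - g y).
Proof.
  intros Hf Hg. split; [|split].
  - intros x y. rewrite !dual_add by assumption. ring.
  - intros r x. rewrite !dual_scal by assumption. ring.
  - destruct Hf as (_ & _ & Mf & HMf), Hg as (_ & _ & Mg & HMg). exists (Mf + Mg). intros x.
    specialize (HMf x); specialize (HMg x).
    pose proof (Rabs_triang (f x) (- g x)) as Htri. rewrite Rabs_Ropp in Htri. rewrite Rmult_plus_distr_r. unfold Rminus. lra.
Qed.

Lemma D_int_degenerate h c : D_int h c c 0.
Proof.
  replace 0 with (0 - 0) by ring.
  exact (D_primitive_int h (fun _ => 0) c c (Rle_refl c) (D_primitive_degenerate _ _ _)).
Qed.

Lemma DG_int_tail (X : BanachSpace) (g : R -> dual X) (L : X -> R) a b c : a <= c <= b -> is_dual X L ->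
  (forall t, a <= t < b -> DG_integrable g a t) -> (forall y, D_int_tends_to (yg g y) a b (L y)) ->
  exists ys, DG_int g c b ys.
Proof.
  intros Hc HL Hint Hlim. destruct (Req_dec c b) as [->|Hcb].
  - exists (exist _ (fun _ => 0) (is_dual_zero X)). intros y. apply D_int_degenerate.
  - destruct (proj2 (Hint c ltac:(lra)) a c) as [K HK]; try lra.
    exists (exist _ (fun y => L y - ev K y) (is_dual_sub X L (ev K) HL (ev_is_dual K))). intros y.
    apply D_int_Hake with a; [lra|apply HK| |apply Hlim].
    intros t Ht. apply (proj1 (Hint t Ht)).
Qed.

Theorem proposition2p1 (X : BanachSpace) (g : R -> dual X) (a b : R) :
  a < b ->
  (forall t, a <= t < b -> DG_integrable g a t) ->
  (forall y : X, exists L, forall eps, 0 < eps -> exists delta, 0 < delta /\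
     forall t, a <= t < b -> b - delta < t -> forall v, D_int (yg g y) a t v ->
       Rabs (v - L) < eps) ->
  DG_integrable g a b /\
  (forall (I : dual X) (J : R -> dual X),
     DG_int g a b I ->
     (forall t, a <= t < b -> DG_int g a t (J t)) ->
     forall y : X, forall eps, 0 < eps -> exists delta, 0 < delta /\
       forall t, a <= t < b -> b - delta < t -> Rabs (ev (J t) y - ev I y) < eps).
Proof.
  intros Hab Hint Hlim.
  destruct (choice _ Hlim) as [L HL]. change (forall y, D_int_tends_to (yg g y) a b (L y)) in HL.
  destruct (choice (fun t J => a <= t < b -> DG_int g a t J)) as [J HJ].
  { intros t. destruct (classic (a <= t < b)) as [Ht|Ht].
    - destruct (proj2 (Hint t Ht) a t) as [J HJ]; [lra..|]. exists J. auto.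
    - exists (exist _ (fun _ => 0) (is_dual_zero X)). tauto. }
  assert (HLdual : is_dual X L).
  { apply (left_limit_dual X J L a b Hab). intros y eps Heps.
    destruct (HL y eps Heps) as [delta [Hdelta Hd]]. exists delta; split; [assumption|].
    intros t Ht Htd. apply (Hd t Ht Htd), HJ, Ht. }
  split; [split|].
  - intros y. destruct (DG_int_tail X g L a b a) as [I HI]; [lra|assumption..|].
    exists (ev I y). apply HI.
  - intros c d Hac Hcd Hdb. destruct (Rlt_le_dec d b) as [Hd|Hd].
    + apply (proj2 (Hint d ltac:(lra))); lra.
    + replace d with b by lra. apply DG_int_tail with L a; auto; lra.
  - intros I J' HI HJ' y eps Heps.
    rewrite (D_int_tends_to_unique (yg g y) a b (ev I y) (L y) Hab (HI y) (HL y)).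
    destruct (HL y eps Heps) as [delta [Hdelta Hd]]. exists delta; split; [assumption|].
    intros t Ht Htd. apply (Hd t Ht Htd), HJ', Ht.
Qed.
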